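(* Let $\Sigma\in\mathsf{c}\text{-}\mathsf{Fan}_{\rm sc}^{+-}(2)$ with rays $v_1=(1,0),v_2,\ldots,v_{n-2}=(0,-1),v_{n-1}=(-1,0),v_n=v_0=(0,1)$ in clockwise order, facets $\sigma_i=\operatorname{cone}\{v_i,v_{i+1}\}$ ($1\le i\le n$), and quiddity sequence $\mathrm{s}(\Sigma)=(a_1,\ldots,a_{n-2};0,0)$. (a) We have $\mathrm{s}(\rho(\Sigma))=(a_2,\ldots,a_{n-2},a_1;0,0)$. In particular, $\rho^{n-2}(\Sigma)=\Sigma$ holds, and therefore $\rho$ is an invertible operation. (b) For each $1\le i\le n-3$, we have $D_{\sigma_i}(\Sigma)=\rho^{n-3-i}\circ D_{\sigma_{n-3}}\circ\rho^{i+1}(\Sigma)$.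
   Context: $\mathsf{c}\text{-}\mathsf{Fan}_{\rm sc}^{+-}(2)$ is the set of complete nonsingular sign-coherent fans in $\mathbb{R}^2$ with positive cone $\sigma_+=\operatorname{cone}\{(1,0),(0,1)\}$ and negative cone $\operatorname{cone}\{(-1,0),(0,-1)\}$ which contain $\sigma_{-+}=\operatorname{cone}\{(-1,0),(0,1)\}$. The quiddity sequence is defined by $a_iv_i=v_{i-1}+v_{i+1}$ (here $a_{n-1}=a_n=0$). For a cone $\sigma=\operatorname{cone}\{u,v\}$ of a nonsingular fan, the subdivision $D_\sigma$ adds the ray $u+v$ and replaces $\sigma$ by $\operatorname{cone}\{u,u+v\}$ and $\operatorname{cone}\{v,u+v\}$. The rotation $\rho(\Sigma)$: take $\sigma=\operatorname{cone}\{(1,0),(\ell,-1)\}\in\Sigma$ (i.e. $v_2=(\ell,-1)$); let $\Sigma'$ have rays $(\Sigma_1\setminus\{(0,1)\})\cup\{(-\ell,1)\}$ and 2-dimensional cones $(\Sigma_2\setminus\{\sigma_+,\sigma_{-+}\})\cup\{-\sigma,\operatorname{cone}\{(-\ell,1),(1,0)\}\}$; then $\rho(\Sigma)$ is the image of $\Sigma'$ under the linear map of $\mathbb{R}^2$ sending $(1,0)\mapsto(0,1)$ and $(\ell,-1)\mapsto(1,0)$. *)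

From mathcomp Require Import all_boot all_algebra.
Set Implicit Arguments. Unset Strict Implicit. Unset Printing Implicit Defensive.
Import GRing.Theory Num.Theory.
Local Open Scope ring_scope.

Definition vec := (int * int)%type.
Definition vadd (u v : vec) : vec := (u.1 + v.1, u.2 + v.2).
Definition vscale (a : int) (v : vec) : vec := (a * v.1, a * v.2).
Definition det (u v : vec) : int := u.1 * v.2 - u.2 * v.1.

(* A complete 2-dimensional fan is determined by its rays; we encode a fan of
   c-Fan_sc^{+-}(2) by the list [v_1; ...; v_n] of its (primitive) rays in
   clockwise order, starting with v_1 = (1,0).  Its 2-dimensional cones are
   sigma_i = cone{v_i, v_{i+1}} (indices mod n).
   [cray s i] is the 0-indexed cyclic access: paper's v_i = cray s (i-1). *)
Definition cray (s : seq vec) (i : nat) : vec := nth (0, 0) s (i %% size s)%N.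

(* Membership in c-Fan_sc^{+-}(2):
   v_1 = (1,0), v_{n-2} = (0,-1), v_{n-1} = (-1,0), v_n = (0,1)
   (so sigma_+, sigma_-, sigma_{-+} are cones), the other rays lie in the
   open fourth quadrant (sign-coherence), and every cone
   cone{v_i, v_{i+1}} is nonsingular and the order is clockwise,
   i.e. det(v_i, v_{i+1}) = -1 for all i (cyclically). *)
Definition in_class (s : seq vec) : Prop :=
  let n := size s in
  [/\ (4 <= n)%N,
      [/\ nth (0, 0) s 0 = ((1 : int), (0 : int)),
          nth (0, 0) s (n - 3) = ((0 : int), (-1 : int)),
          nth (0, 0) s (n - 2) = ((-1 : int), (0 : int)) &
          nth (0, 0) s (n - 1) = ((0 : int), (1 : int))],
      (forall i, (1 <= i <= n - 4)%N ->
         0 < (nth (0, 0) s i).1 /\ (nth (0, 0) s i).2 < 0) &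
      (forall i, (i < n)%N -> det (cray s i) (cray s i.+1) = -1)].

(* a is the quiddity sequence of s: a_i v_i = v_{i-1} + v_{i+1} (cyclic);
   0-indexed: a`_i corresponds to the paper's a_{i+1}. *)
Definition is_quiddity (s : seq vec) (a : seq int) : Prop :=
  size a = size s /\
  forall i, (i < size s)%N ->
    vscale (nth 0 a i) (cray s i) = vadd (cray s (i + size s - 1)) (cray s i.+1).

(* Subdivision D_{sigma_i} of the facet sigma_i = cone{v_i, v_{i+1}}
   (paper's 1-indexed i, 1 <= i <= n): insert the ray v_i + v_{i+1}
   between v_i and v_{i+1}. *)
Definition subdiv (s : seq vec) (i : nat) : seq vec :=
  take i s ++ vadd (cray s i.-1) (cray s i) :: drop i s.

(* The linear map of R^2 sending (1,0) |-> (0,1) and (l,-1) |-> (1,0):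
   (x,y) |-> (-y, x + l y). *)
Definition rmap (l : int) (v : vec) : vec := (- v.2, v.1 + l * v.2).

(* Rotation rho: with v_2 = (l,-1), Sigma' has rays
   v_1, ..., v_{n-1}, (-l,1) in clockwise order (the ray v_n = (0,1) is
   replaced by (-l,1), and the cones sigma_+, sigma_{-+} by -sigma and
   cone{(-l,1),(1,0)}); rho(Sigma) is its image under [rmap l].  The final
   [rot 1] only re-chooses the starting ray so that the list starts at the
   image (1,0) of v_2, as required by our encoding. *)
Definition rho (s : seq vec) : seq vec :=
  let l := (nth (0, 0) s 1).1 in
  let s' := rcons (take (size s - 1) s) (- l, 1) in
  rot 1 (map (rmap l) s').

(* A fan of the class is determined by its number of rays and its quiddity
   sequence: from v_n = (0,1) and v_1 = (1,0), the relations
   a_i v_i = v_{i-1} + v_{i+1} recover every ray.  So everything reduces to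
   computing quiddity sequences.  Sigma' differs from Sigma only in its last
   ray, which turns (a_1, ..., a_{n-2}, 0, 0) into (0, a_2, ..., a_{n-2}, a_1, 0);
   the unimodular map does not change quiddities and the final re-indexing
   shifts the sequence cyclically, which gives (a) and rho^(n-2) = id.
   Sign-coherence of rho(Sigma) holds because v_3, ..., v_{n-2} lie clockwise
   of v_2, and rho is injective because l can be read off rho(Sigma) as the
   image of (0,-1).  Subdividing cone{v_i, v_{i+1}} inserts a 1 between
   a_i + 1 and a_{i+1} + 1, so both sides of (b) have the same quiddity. *)

From mathcomp Require Import all_boot all_order all_algebra.
From mathcomp Require Import zify ring.
Import Order.TTheory GRing.Theory.
Local Open Scope ring_scope.

Lemma nth_rot (T : Type) (x0 : T) k (s : seq T) i :
  (k <= size s)%N -> (i < size s)%N ->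
  nth x0 (rot k s) i = nth x0 s ((k + i) %% size s)%N.
Proof.
move=> hk hi; rewrite /rot nth_cat size_drop.
case: ltnP => hik; first by rewrite nth_drop modn_small //; lia.
rewrite nth_take; last lia.
have -> : (k + i = (i - (size s - k)) + size s)%N by lia.
by rewrite modnDr modn_small //; lia.
Qed.

Lemma cat_take_nth2_drop {T : Type} (x0 : T) (s : seq T) k : (k.+1 < size s)%N ->
  s = take k s ++ [:: nth x0 s k, nth x0 s k.+1 & drop k.+2 s].
Proof.
move=> hk; rewrite -{1}(cat_take_drop k s) (drop_nth x0) 1?(drop_nth x0) //.
exact: ltnW.
Qed.

Lemma cray_nth s i : (i < size s)%N -> cray s i = nth (0, 0) s i.
Proof. by move=> hi; rewrite /cray modn_small. Qed.

Lemma cray_eqmod s i j : i = j %[mod size s] -> cray s i = cray s j.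
Proof. by rewrite /cray => ->. Qed.

Lemma crayD s i : cray s (i + size s)%N = cray s i.
Proof. by apply: cray_eqmod; rewrite modnDr. Qed.

Lemma cray_prev s i : (0 < i)%N -> cray s (i + size s - 1)%N = cray s i.-1.
Proof. by move=> hi; rewrite -(crayD s i.-1); congr cray; lia. Qed.

Lemma cray_rot k s i : (k <= size s)%N -> cray (rot k s) i = cray s (k + i)%N.
Proof.
case: s => [|x t] hk; first by rewrite rot_oversize // /cray !nth_nil.
by rewrite /cray size_rot nth_rot ?ltn_pmod // modnDmr.
Qed.

Lemma cray_map f s i : (0 < size s)%N -> cray (map f s) i = f (cray s i).
Proof. by move=> n_gt0; rewrite /cray size_map (nth_map (0, 0)) ?ltn_pmod. Qed.

Lemma vadd_inj u : injective (vadd u).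
Proof. by case: u => x y [z w] [z' w'] [/addrI -> /addrI ->]. Qed.

Lemma vscale_add1_next c v p w : vscale c v = vadd p w ->
  vscale (c + 1) v = vadd p (vadd v w).
Proof.
case: v p w => x y [p1 p2] [w1 w2]; rewrite /vscale /vadd /= => -[e1 e2].
by congr pair; rewrite mulrDl mul1r ?e1 ?e2; ring.
Qed.

Lemma vscale_add1_prev c v p w : vscale c v = vadd p w ->
  vscale (c + 1) v = vadd (vadd p v) w.
Proof.
case: v p w => x y [p1 p2] [w1 w2]; rewrite /vscale /vadd /= => -[e1 e2].
by congr pair; rewrite mulrDl mul1r ?e1 ?e2; ring.
Qed.

Lemma det_vaddr u v : det u (vadd u v) = det u v.
Proof. by case: u v => x y [z w]; rewrite /det /vadd /=; ring. Qed.

Lemma det_vaddl u v : det (vadd u v) v = det u v.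
Proof. by case: u v => x y [z w]; rewrite /det /vadd /=; ring. Qed.

Lemma det_lt0_trans u v w : 0 < u.1 - u.2 -> 0 < v.1 - v.2 -> 0 < w.1 - w.2 ->
  det u v < 0 -> det v w < 0 -> det u w < 0.
Proof. by case: u v w => a b [c d] [e f]; rewrite /det /=; nia. Qed.

Lemma rmap_vadd l u v : rmap l (vadd u v) = vadd (rmap l u) (rmap l v).
Proof. by case: u v => x y [z w]; rewrite /rmap /vadd /=; congr pair; ring. Qed.

Lemma rmap_vscale l c v : rmap l (vscale c v) = vscale c (rmap l v).
Proof. by case: v => x y; rewrite /rmap /vscale /=; congr pair; ring. Qed.

Lemma det_rmap l u v : det (rmap l u) (rmap l v) = det u v.
Proof. by case: u v => x y [z w]; rewrite /rmap /det /=; ring. Qed.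

Lemma rmap_inj l : injective (rmap l).
Proof. by move=> [x y] [z w] [/oppr_inj <- /addIr ->]. Qed.

Definition unimodular (s : seq vec) :=
  forall i, (i < size s)%N -> det (cray s i) (cray s i.+1) = -1.

Lemma unimodular_rot k s : (k <= size s)%N -> unimodular s -> unimodular (rot k s).
Proof.
move=> hk hs i; rewrite size_rot => hi.
have n_gt0 : (0 < size s)%N by lia.
rewrite !cray_rot // -(hs _ (ltn_pmod (k + i) n_gt0)); congr det; apply: cray_eqmod.
  by rewrite modn_mod.
by rewrite addnS -[in RHS]addn1 modnDml addn1.
Qed.

Lemma unimodular_rot_cat s1 s2 : unimodular (s1 ++ s2) -> unimodular (s2 ++ s1).
Proof.
by move=> hs; rewrite -rot_size_cat; apply: unimodular_rot; rewrite // size_cat leq_addr.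
Qed.

Lemma unimodular_map f s : (0 < size s)%N -> (forall u v, det (f u) (f v) = det u v) ->
  unimodular s -> unimodular (map f s).
Proof. by move=> n_gt0 hf hs i; rewrite size_map !cray_map // hf; apply: hs. Qed.

Lemma is_quiddity_rot k s q : (k <= size s)%N ->
  is_quiddity s q -> is_quiddity (rot k s) (rot k q).
Proof.
move=> hk [hq hs]; split; first by rewrite !size_rot.
move=> i; rewrite size_rot => hi.
have n_gt0 : (0 < size s)%N by lia.
rewrite nth_rot ?hq // !cray_rot //.
set j := ((k + i) %% size s)%N.
have -> : cray s (k + i) = cray s j by apply: cray_eqmod; rewrite modn_mod.
rewrite hs ?ltn_pmod //; congr vadd; apply: cray_eqmod.
  have -> : (k + (i + size s - 1) = (k + i) + (size s - 1))%N by lia.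
  have -> : (j + size s - 1 = j + (size s - 1))%N by lia.
  by rewrite modnDml.
by rewrite /j -addn1 modnDml addn1 addnS.
Qed.

Lemma is_quiddity_rot_cat {s1 s2 q1 q2} : size s1 = size q1 ->
  is_quiddity (s1 ++ s2) (q1 ++ q2) -> is_quiddity (s2 ++ s1) (q2 ++ q1).
Proof.
move=> size_1 hq; rewrite -rot_size_cat -[q2 ++ q1]rot_size_cat -size_1.
by apply: is_quiddity_rot; rewrite // size_cat leq_addr.
Qed.

Lemma is_quiddity_map f s q : (0 < size s)%N ->
  (forall u v, f (vadd u v) = vadd (f u) (f v)) ->
  (forall c v, f (vscale c v) = vscale c (f v)) ->
  is_quiddity s q -> is_quiddity (map f s) q.
Proof.
move=> n_gt0 fD fZ [hq hs]; split; first by rewrite size_map.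
by move=> i; rewrite size_map => hi; rewrite !cray_map // -fZ -fD hs.
Qed.

(* Induction along the recurrence v_{j+1} = q_j v_j - v_{j-1}. *)
Lemma is_quiddity_inj t u q : is_quiddity t q -> is_quiddity u q ->
  nth (0, 0) t 0 = nth (0, 0) u 0 ->
  nth (0, 0) t (size t - 1) = nth (0, 0) u (size u - 1) -> t = u.
Proof.
move=> [qt ht] [qu hu] e0 elast.
have size_tu : size u = size t by rewrite -qu qt.
have agree j : (j < size t)%N ->
    cray t j = cray u j /\ cray t (j + size t - 1) = cray u (j + size u - 1).
  elim: j => [|j IHj] hj.
    by rewrite !add0n !cray_nth ?e0 ?elast ?size_tu //; lia.
  have [ej eprev] := IHj (ltnW hj).
  rewrite !cray_prev //; split=> //.
  apply: (vadd_inj (cray t (j + size t - 1))).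
  by rewrite -ht ?(ltnW hj) // eprev -hu ?size_tu ?(ltnW hj) // ej.
apply: (eq_from_nth (x0 := (0, 0))) => // j hj.
by have [+ _] := agree j hj; rewrite !cray_nth ?size_tu.
Qed.

Section Blowup.

Context {u v : vec} {t : seq vec}.

Lemma cray_blowup k : (0 < k <= (size t).+2)%N ->
  cray [:: u, vadd u v, v & t] k.+1 = cray [:: u, v & t] k.
Proof.
case: k => [//|k]; rewrite ltnS /= => k_le.
case: (ltnP k.+1 (size t).+2) => k_lt; first by rewrite !cray_nth.
have -> : k = (size t).+1 by lia.
by rewrite /cray /= !modnn.
Qed.

Lemma unimodular_blowup :
  unimodular [:: u, v & t] -> unimodular [:: u, vadd u v, v & t].
Proof.
move=> hs [|[|i]] hi.
- by rewrite det_vaddr; apply: (hs 0%N).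
- by rewrite det_vaddl; apply: (hs 0%N).
- by rewrite !cray_blowup ?hs //; rewrite /= in hi *; lia.
Qed.

Lemma is_quiddity_blowup x y q : is_quiddity [:: u, v & t] [:: x, y & q] ->
  is_quiddity [:: u, vadd u v, v & t] [:: x + 1, 1, y + 1 & q].
Proof.
move=> [hq hs]; split; first by case: hq => /= ->.
move=> [|[|[|i]]] hi.
- have := hs 0%N isT; rewrite add0n subn1 /= => h0.
  rewrite add0n subn1 /= (cray_blowup (size t).+1) ?leqnSn //.
  by move: h0; rewrite !cray_nth //=; apply: vscale_add1_next.
- rewrite cray_prev // !cray_nth //=.
  by case: (vadd u v) => ? ?; rewrite /vscale /= !mul1r.
- have := hs 1%N isT; rewrite cray_prev // (cray_nth _ 0) // (cray_nth _ 1) //= => h1.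
  rewrite cray_prev // (cray_nth _ 1) // (cray_nth _ 2) //= (cray_blowup 2) //.
  exact: vscale_add1_prev.
- rewrite /= in hi; have := hs i.+2 ltac:(rewrite /=; lia).
  by rewrite !cray_prev // !cray_blowup //=; lia.
Qed.

End Blowup.

Lemma subdiv_cat t1 u v t2 :
  subdiv (t1 ++ [:: u, v & t2]) (size t1).+1 = t1 ++ [:: u, vadd u v, v & t2].
Proof.
have size_t : ((size t1).+1 < size (t1 ++ [:: u, v & t2]))%N.
  by rewrite size_cat -addn1 ltn_add2l.
have cray_u : cray (t1 ++ [:: u, v & t2]) (size t1) = u.
  by rewrite cray_nth ?nth_cat ?ltnn ?subnn // ltnW.
have cray_v : cray (t1 ++ [:: u, v & t2]) (size t1).+1 = v.
  by rewrite cray_nth // nth_cat ltnNge leqnSn subSnn.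
rewrite /subdiv [(size t1).+1.-1]/= cray_u cray_v -[t1 ++ _]cat_rcons.
by rewrite take_size_cat ?size_rcons // drop_size_cat ?size_rcons // cat_rcons.
Qed.

Lemma unimodular_subdiv t p : (0 < p < size t)%N -> unimodular t -> unimodular (subdiv t p).
Proof.
case: p => [//|p] /= hp.
rewrite {1 2}(cat_take_nth2_drop (0, 0) t p hp); set t1 := take p t.
have <- : size t1 = p by rewrite size_takel //; lia.
rewrite subdiv_cat => /unimodular_rot_cat hs.
by apply: unimodular_rot_cat; apply: unimodular_blowup.
Qed.

Lemma is_quiddity_subdiv {t q1 x y q2} : is_quiddity t (q1 ++ [:: x, y & q2]) ->
  is_quiddity (subdiv t (size q1).+1) (q1 ++ [:: x + 1, 1, y + 1 & q2]).
Proof.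
move=> hq; have size_t : size t = (size q1 + (size q2).+2)%N by rewrite -hq.1 size_cat.
have hp : ((size q1).+1 < size t)%N by rewrite size_t -addn1 ltn_add2l.
(* Rotate the subdivided pair to the front, blow up there and rotate back. *)
move: hq; rewrite {1 2}(cat_take_nth2_drop (0, 0) t (size q1) hp).
set t1 := take (size q1) t.
have size_1 : size t1 = size q1 by rewrite size_takel //; lia.
move: (nth _ t (size q1)) (nth _ t (size q1).+1) (drop _ t) => u v t2.
rewrite -size_1 subdiv_cat => hq.
have size_2 : size q2 = size t2.
  by case: hq; rewrite !size_cat size_1 => /addnI [].
apply: (@is_quiddity_rot_cat [:: u, vadd u v, v & t2] _ [:: x + 1, 1, y + 1 & q2]).
  by rewrite /= size_2.
exact: is_quiddity_blowup (is_quiddity_rot_cat size_1 hq).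
Qed.

Definition ell (s : seq vec) : int := (nth (0, 0) s 1).1.

Section InClass.

Context {s : seq vec}.
Hypothesis s_in : in_class s.

Lemma size_in_class : (4 <= size s)%N.
Proof. by case: s_in. Qed.

Lemma det_consecutive j : (j.+1 < size s)%N ->
  det (nth (0, 0) s j) (nth (0, 0) s j.+1) = -1.
Proof. by case: s_in => _ _ _ hu hj; rewrite -!cray_nth ?hu //; lia. Qed.

Lemma second_ray : nth (0, 0) s 1 = (ell s, -1).
Proof.
have two_lt : (1 < size s)%N by have := size_in_class; lia.
case: s_in (det_consecutive 0 two_lt) => _ [-> _ _ _] _ _.
rewrite /ell; case: (nth _ s 1) => x y.
by rewrite /det /= mul1r mul0r subr0 => ->.
Qed.

Lemma ray_x_gt0 j : (j <= size s - 4)%N ->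
  0 < (nth (0, 0) s j).1 /\ (nth (0, 0) s j).2 <= 0.
Proof.
case: s_in => _ [r0 _ _ _] interior _; case: j => [_|j hj]; first by rewrite r0.
by have [? /ltW ?] := interior j.+1 ltac:(lia).
Qed.

Lemma ray_y_lt0 j : (1 <= j <= size s - 3)%N ->
  0 <= (nth (0, 0) s j).1 /\ (nth (0, 0) s j).2 < 0.
Proof.
case: s_in => _ [_ r3 _ _] interior _ hj.
have [->|j_lt] := eqVneq j (size s - 3)%N; first by rewrite r3.
by have [/ltW ? ?] := interior j ltac:(lia).
Qed.

Lemma det_second_ray_lt0 k : (2 <= k <= size s - 3)%N ->
  det (nth (0, 0) s 1) (nth (0, 0) s k) < 0.
Proof.
have h4 := size_in_class.
have x_gt_y j : (1 <= j <= size s - 3)%N -> 0 < (nth (0, 0) s j).1 - (nth (0, 0) s j).2.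
  by move=> hj; have [? ?] := ray_y_lt0 j hj; lia.
elim: k => [//|k IHk] hk.
have [-> | k_gt1] := eqVneq k 1%N; first by rewrite det_consecutive //; lia.
apply: (@det_lt0_trans _ (nth (0, 0) s k)); rewrite ?x_gt_y ?IHk //; try lia.
by rewrite det_consecutive //; lia.
Qed.

Lemma in_class_rcons : s = rcons (take (size s - 1) s) (0, 1).
Proof.
case: s_in => h4 [_ _ _ <-] _ _.
rewrite -cats1 -{1}(cat_take_drop (size s - 1) s) (drop_nth ((0, 0) : vec)); last lia.
by rewrite drop_oversize //; lia.
Qed.

End InClass.

Lemma in_class_quiddity_inj {t u q} : in_class t -> in_class u ->
  is_quiddity t q -> is_quiddity u q -> t = u.
Proof.
case=> _ [t0 _ _ t1] _ _ [_ [u0 _ _ u1] _ _] qt qu.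
by apply: (is_quiddity_inj _ _ _ qt qu); rewrite ?t0 ?u0 ?t1 ?u1.
Qed.

Lemma size_subdiv t p : (p <= size t)%N -> size (subdiv t p) = (size t).+1.
Proof. by move=> hp; rewrite size_cat /= size_drop size_takel //; lia. Qed.

Lemma nth_subdiv t p k : (p <= size t)%N ->
  nth (0, 0) (subdiv t p) k =
  if (k < p)%N then nth (0, 0) t k
  else if k == p then vadd (cray t p.-1) (cray t p) else nth (0, 0) t k.-1.
Proof.
move=> hp; rewrite nth_cat size_takel //.
case: ltnP => hk; first by rewrite nth_take.
case: eqP => [->|hne]; first by rewrite subnn.
have -> : (k - p = (k - p.+1).+1)%N by lia.
by rewrite /= nth_drop; congr nth; lia.
Qed.

Lemma in_class_subdiv {t p} : in_class t -> (1 <= p <= size t - 3)%N ->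
  in_class (subdiv t p).
Proof.
move=> t_in hp; have h4 := size_in_class t_in.
case: (t_in) => _ [r0 r3 r2 r1] interior hu.
have above k : (p < k)%N -> nth (0, 0) (subdiv t p) k = nth (0, 0) t k.-1.
  by move=> hk; rewrite nth_subdiv ?ifF //; lia.
split; [by rewrite size_subdiv; lia | | | by apply: unimodular_subdiv => //; lia].
- rewrite size_subdiv; last lia.
  split; first by rewrite nth_subdiv ?ifT ?r0 //; lia.
  + rewrite above; last lia.
    by have -> : ((size t).+1 - 3).-1 = (size t - 3)%N by lia.
  + rewrite above; last lia.
    by have -> : ((size t).+1 - 2).-1 = (size t - 2)%N by lia.
  + rewrite above; last lia.
    by have -> : ((size t).+1 - 1).-1 = (size t - 1)%N by lia.
- move=> k; rewrite size_subdiv => [hk|]; last lia.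
  rewrite nth_subdiv; last lia.
  case: ltnP => [k_lt | k_ge]; first by apply: interior; lia.
  have [_ | k_ne] := eqVneq k p; last by apply: interior; lia.
  have [ux_gt0 uy_le0] := ray_x_gt0 t_in p.-1 ltac:(lia).
  have [vx_ge0 vy_lt0] := ray_y_lt0 t_in p ltac:(lia).
  rewrite !cray_nth; try lia.
  move: ux_gt0 uy_le0 vx_ge0 vy_lt0; rewrite /vadd.
  by case: (nth _ t p.-1) (nth _ t p) => [a b] [c d] /=; split; lia.
Qed.

Definition pre_rho (s : seq vec) : seq vec := rcons (take (size s - 1) s) (- ell s, 1).

Lemma rhoE s : rho s = rot 1 (map (rmap (ell s)) (pre_rho s)).
Proof. by []. Qed.

Lemma size_pre_rho s : (0 < size s)%N -> size (pre_rho s) = size s.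
Proof. by move=> n_gt0; rewrite size_rcons size_takel ?leq_subr // subn1 prednK. Qed.

Lemma cray_pre_rho s j : (j < size s - 1)%N -> cray (pre_rho s) j = nth (0, 0) s j.
Proof.
move=> hj; rewrite cray_nth ?size_pre_rho; try lia.
by rewrite nth_rcons size_takel ?leq_subr // hj nth_take.
Qed.

Lemma cray_pre_rho_last s : (0 < size s)%N ->
  cray (pre_rho s) (size s - 1) = (- ell s, 1).
Proof.
move=> n_gt0; rewrite cray_nth ?size_pre_rho; try lia.
by rewrite nth_rcons size_takel ?leq_subr // ltnn eqxx.
Qed.

Lemma cray_rho s j : (0 < size s)%N ->
  cray (rho s) j = rmap (ell s) (cray (pre_rho s) j.+1).
Proof.
move=> n_gt0; rewrite rhoE cray_rot ?cray_map ?size_map ?size_pre_rho //.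
Qed.

Lemma size_rho s : (0 < size s)%N -> size (rho s) = size s.
Proof. by move=> n_gt0; rewrite rhoE size_rot size_map size_pre_rho. Qed.

Section Rotation.

Context {s : seq vec}.
Hypothesis s_in : in_class s.

Let n_ge4 : (4 <= size s)%N := size_in_class s_in.

Lemma cray_pre_rho_wrap : cray (pre_rho s) (size s) = (1, 0).
Proof.
have := crayD (pre_rho s) 0; rewrite add0n size_pre_rho => [->|]; last lia.
by rewrite cray_pre_rho; last lia; case: s_in => _ [].
Qed.

Lemma unimodular_pre_rho : unimodular (pre_rho s).
Proof.
case: s_in => _ [_ _ r2 _] _ _.
move=> i; rewrite size_pre_rho; last lia; move=> hi.
have [i_lt | i_ge] := ltnP i.+1 (size s - 1).
  by rewrite !cray_pre_rho ?(det_consecutive s_in) //; lia.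
have [-> | i_last] := eqVneq i (size s - 2)%N.
  have -> : (size s - 2).+1 = (size s - 1)%N by lia.
  by rewrite cray_pre_rho_last ?cray_pre_rho ?r2 /det /=; try lia; ring.
have -> : i = (size s - 1)%N by lia.
have -> : (size s - 1).+1 = size s by lia.
by rewrite cray_pre_rho_last ?cray_pre_rho_wrap /det /=; try lia; ring.
Qed.

Lemma is_quiddity_pre_rho (b0 : int) (b : seq int) : is_quiddity s (b0 :: b ++ [:: 0; 0]) ->
  is_quiddity (pre_rho s) (0 :: b ++ [:: b0; 0]).
Proof.
case: s_in => _ [r0 r3 r2 r1] _ _ [size_q hs].
have size_b : size b = (size s - 3)%N by move: size_q; rewrite /= size_cat /=; lia.
have b0_ell : b0 = ell s.
  have := hs 0%N ltac:(lia); rewrite add0n !cray_nth ?r0 ?r1 ?(second_ray s_in) //; try lia.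
  by rewrite /vscale /vadd /= mulr1 add0r => -[].
split; first by rewrite size_pre_rho /= ?size_cat /=; lia.
have size_pre : size (pre_rho s) = size s by rewrite size_pre_rho //; lia.
move=> i; rewrite {1}size_pre => hi.
have [-> | i_gt0] := posnP i.
  rewrite add0n size_pre cray_pre_rho_last ?cray_pre_rho ?(second_ray s_in) //; try lia.
  by rewrite /vscale /vadd /= !mul0r addNr addrN.
rewrite cray_prev //.
have [i_lt | i_ge] := ltnP i (size s - 2).
  have := hs i hi; rewrite cray_prev // !cray_pre_rho ?(cray_nth s); try lia.
  case: i i_gt0 i_lt {hi} => [//|i] _ i_lt /=.
  by rewrite !nth_cat; suff -> : (i < size b)%N by []; lia.
have [-> | i_ne] := eqVneq i (size s - 2)%N.
  have -> : (size s - 2 = (size b).+1)%N by lia.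
  rewrite /= nth_cat ltnn subnn.
  have -> : ((size b).+2 = size s - 1)%N by lia.
  rewrite cray_pre_rho_last ?cray_pre_rho; try lia.
  rewrite size_b.
  have -> : (size s - 3).+1 = (size s - 2)%N by lia.
  by rewrite r2 r3 b0_ell /vscale /vadd /=; congr pair; ring.
have -> : i = (size b).+2 by lia.
rewrite /= nth_cat ltnNge leqnSn /= subSnn /=.
have -> : ((size b).+2 = size s - 1)%N by lia.
rewrite cray_pre_rho_last; last lia.
have -> : (size s - 1).+1 = size s by lia.
rewrite cray_pre_rho_wrap cray_pre_rho; last lia.
have -> : (size b).+1 = (size s - 2)%N by lia.
by rewrite r2 /vscale /vadd /=; congr pair; ring.
Qed.

Lemma is_quiddity_rho (b : seq int) : is_quiddity s (b ++ [:: 0; 0]) ->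
  is_quiddity (rho s) (rot 1 b ++ [:: 0; 0]).
Proof.
case: b => [|b0 b] hq; first by case: hq => /=; lia.
rewrite rhoE rot1_cons.
have -> : rcons b b0 ++ [:: 0; 0] = rot 1 (0 :: b ++ [:: b0; 0]).
  by rewrite rot1_cons -!cats1 -!catA.
apply: is_quiddity_rot; first by rewrite size_map size_pre_rho; lia.
apply: is_quiddity_map; [|exact: rmap_vadd|exact: rmap_vscale|exact: is_quiddity_pre_rho].
by rewrite size_pre_rho; lia.
Qed.

Lemma in_class_rho : in_class (rho s).
Proof.
have size_rho : size (rho s) = size s by rewrite size_rho //; lia.
have nth_rho j : (j < size s)%N ->
    nth (0, 0) (rho s) j = rmap (ell s) (cray (pre_rho s) j.+1).
  by move=> hj; rewrite -cray_nth ?size_rho // cray_rho //; lia.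
have unimodular_rho : unimodular (rho s).
  rewrite rhoE; apply: unimodular_rot; first by rewrite size_map size_pre_rho; lia.
  apply: unimodular_map; [rewrite size_pre_rho; lia | exact: det_rmap |].
  exact: unimodular_pre_rho.
case: s_in => _ [r0 r3 r2 r1] _ _.
split; [by rewrite size_rho | | | exact: unimodular_rho]; rewrite size_rho.
- rewrite !nth_rho; try lia.
  have -> : (size s - 3).+1 = (size s - 2)%N by lia.
  have -> : (size s - 2).+1 = (size s - 1)%N by lia.
  have -> : (size s - 1).+1 = size s by lia.
  rewrite cray_pre_rho_last ?cray_pre_rho_wrap ?cray_pre_rho ?(second_ray s_in) ?r2;
    try lia.
  by split; rewrite /rmap /=; congr pair; ring.
- move=> i hi; rewrite nth_rho ?cray_pre_rho; try lia.
  have [_ y_lt0] := ray_y_lt0 s_in i.+1 ltac:(lia).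
  have := det_second_ray_lt0 s_in i.+1 ltac:(lia).
  (* rmap (ell s) v = (- v.2, det v_2 v) *)
  rewrite (second_ray s_in) /rmap /det /=.
  case: (nth _ s i.+1) y_lt0 => x y /= y_lt0 det_lt0.
  by split; lia.
Qed.

Lemma nth_rho_ell : nth (0, 0) (rho s) (size s - 4) = (1, - ell s).
Proof.
case: s_in => _ [_ r3 _ _] _ _.
rewrite -cray_nth ?size_rho ?cray_rho ?cray_pre_rho; try lia.
have -> : (size s - 4).+1 = (size s - 3)%N by lia.
by rewrite r3 /rmap /=; congr pair; ring.
Qed.

End Rotation.

Lemma rho_inj t u : in_class t -> in_class u -> rho t = rho u -> t = u.
Proof.
move=> t_in u_in e.
have size_tu : size t = size u.
  have := size_in_class t_in; have := size_in_class u_in => ? ?.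
  by rewrite -size_rho ?e ?size_rho //; lia.
have ell_tu : ell t = ell u.
  by have := nth_rho_ell t_in; rewrite e size_tu nth_rho_ell // => -[/oppr_inj].
move: e; rewrite !rhoE ell_tu => /rot_inj/(inj_map (@rmap_inj _)).
rewrite /pre_rho ell_tu size_tu => /rcons_inj[e].
by rewrite (in_class_rcons t_in) (in_class_rcons u_in) size_tu e.
Qed.

Lemma iter_rho_quiddity k {s} {b : seq int} :
  in_class s -> is_quiddity s (b ++ [:: 0; 0]) ->
  (k <= size b)%N ->
  in_class (iter k rho s) /\ is_quiddity (iter k rho s) (rot k b ++ [:: 0; 0]).
Proof.
move=> s_in hq; elim: k => [|k IHk] hk; first by rewrite rot0.
have [in_k q_k] := IHk (ltnW hk).
by rewrite iterS rotS //; split; [exact: in_class_rho | exact: is_quiddity_rho].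
Qed.

Lemma iter_rho_period {s} {a : seq int} : in_class s -> is_quiddity s (a ++ [:: 0; 0]) ->
  iter (size a) rho s = s.
Proof.
move=> s_in hq; have [in_n q_n] := iter_rho_quiddity (size a) s_in hq (leqnn _).
by rewrite rot_size in q_n; apply: in_class_quiddity_inj in_n s_in q_n hq.
Qed.

Lemma subdiv_rho_conj {s} {a : seq int} {i} :
  in_class s -> is_quiddity s (a ++ [:: 0; 0]) ->
  (1 <= i <= size s - 3)%N ->
  subdiv s i = iter (size s - 3 - i) rho (subdiv (iter i.+1 rho s) (size s - 3)).
Proof.
move=> s_in hq hi; have n_ge4 := size_in_class s_in.
have size_a : size a = (size s - 2)%N by move: hq.1; rewrite size_cat /=; lia.
rewrite (cat_take_nth2_drop (0 : int) a i.-1) in hq *; last lia.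
set a1 := take i.-1 a in hq *; set x := nth 0 a i.-1 in hq *.
set y := nth 0 a i.-1.+1 in hq *; set a2 := drop i.-1.+2 a in hq *.
have size_a1 : size a1 = i.-1 by rewrite size_takel //; lia.
have size_a2 : size a2 = (size s - 3 - i)%N by rewrite size_drop; lia.
(* Both sides are in the class, with quiddity a1 ++ [x+1, 1, y+1] ++ a2 ++ [0, 0]. *)
have in_l : in_class (subdiv s i) by exact: in_class_subdiv.
have q_l : is_quiddity (subdiv s i) (a1 ++ [:: x + 1, 1, y + 1 & a2 ++ [:: 0; 0]]).
  by move: hq; rewrite -catA => /is_quiddity_subdiv; rewrite size_a1 prednK //; lia.
have [in_t q_t] := iter_rho_quiddity i.+1 s_in hq ltac:(rewrite size_cat size_a1 /=; lia).
have rot_a : rot i.+1 (a1 ++ [:: x, y & a2]) = a2 ++ a1 ++ [:: x; y].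
  have -> : i.+1 = size (a1 ++ [:: x; y]) by rewrite size_cat size_a1 /=; lia.
  by rewrite -[X in rot _ X]/(a1 ++ [:: x; y] ++ a2) (catA a1) rot_size_cat.
have size_t : size (iter i.+1 rho s) = size s.
  by rewrite -q_t.1 -hq.1 !(size_cat _ [:: 0; 0]) size_rot.
have q_t' : is_quiddity (iter i.+1 rho s) ((a2 ++ a1) ++ [:: x, y & [:: 0; 0]]).
  by rewrite -!catA; rewrite rot_a -!catA in q_t.
have in_w : in_class (subdiv (iter i.+1 rho s) (size s - 3)).
  by apply: in_class_subdiv; rewrite // size_t; lia.
have := is_quiddity_subdiv q_t'.
have -> : (size (a2 ++ a1)).+1 = (size s - 3)%N by rewrite size_cat size_a1 size_a2; lia.
rewrite -[[:: x + 1, 1, y + 1 & _]]/([:: x + 1; 1; y + 1] ++ [:: 0; 0]) catA => q_w.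
have [in_r q_r] := iter_rho_quiddity (size s - 3 - i) in_w q_w
  ltac:(rewrite !size_cat size_a1 size_a2 /=; lia).
rewrite -{2}size_a2 -catA rot_size_cat -!catA in q_r.
exact: in_class_quiddity_inj in_l in_r q_l q_r.
Qed.

Theorem proposition4p5 (s : seq vec) (a : seq int) :
  in_class s ->
  size a = (size s - 2)%N ->
  is_quiddity s (a ++ [:: 0; 0]) ->
  [/\ in_class (rho s) /\ is_quiddity (rho s) (rot 1 a ++ [:: 0; 0]),
      iter (size s - 2) rho s = s,
      (forall t u, in_class t -> in_class u -> rho t = rho u -> t = u),
      (exists u, in_class u /\ rho u = s) &
      (forall i, (1 <= i <= size s - 3)%N ->
         subdiv s i =
         iter (size s - 3 - i) rho (subdiv (iter i.+1 rho s) (size s - 3)))].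
Proof.
move=> s_in size_a hq.
have period : iter (size s - 2) rho s = s by rewrite -size_a iter_rho_period.
split=> //.
- by split; [exact: in_class_rho | exact: is_quiddity_rho].
- exact: rho_inj.
- exists (iter (size s - 3) rho s); split.
    by have [] := iter_rho_quiddity (size s - 3) s_in hq ltac:(lia).
  have n_ge4 := size_in_class s_in.
  by rewrite -(iterS _ rho); have -> : (size s - 3).+1 = (size s - 2)%N by lia.
- by move=> i; apply: subdiv_rho_conj s_in hq.
Qed.
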